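(* For every $j\in\{0,\dots,r-3\}$ and $n\in\mathbb{Z}$: $\chi_j(n)\ne0\Rightarrow n^2\equiv m_0^2\pmod{4P}$. (In particular $4P$ divides $m^2-m_0^2$ for every $m$ in the support of $\chi$.)
   Context: $r\ge3$; $p_1,\dots,p_r$ positive pairwise coprime, $p_2,\dots,p_r$ odd, $P=p_1\cdots p_r$, $\hat p_j=P/p_j$, $E=\{\pm1\}^r$, $\mathcal{N}_*(\underline\varepsilon)=\sum_j\varepsilon_j\hat p_j$, $m_0=(r-2-\sum_j1/p_j)P\in\mathbb{Z}$. $\chi:\mathbb{Z}\to\mathbb{Z}$ vanishes off $\mathfrak{S}=rP+\mathcal{N}_*(E)+2P\mathbb{Z}$ and on $\mathfrak{S}$ equals $\frac{(\ell+1)\cdots(\ell+r-3)}{(r-3)!}\varepsilon_1\cdots\varepsilon_r$, where $\underline\varepsilon\in E$ is the unique element with $\mathcal{N}_*(\underline\varepsilon)\equiv m-rP\bmod2P$ and $\ell=(m-(r-2)P-\mathcal{N}_*(\underline\varepsilon))/(2P)$. $\chi_0,\dots,\chi_{r-3}$ are the unique $2P$-periodic functions with $\chi(m)=\sum_jm^j\chi_j(m)$. *)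

From HB Require Import structures.
From mathcomp Require Import all_boot all_order all_algebra.
Set Implicit Arguments. Unset Strict Implicit. Unset Printing Implicit Defensive.
Import Order.TTheory GRing.Theory Num.Theory.
Local Open Scope ring_scope.

(* Indices j = 1..r of the paper are represented by i : 'I_r (i = j - 1). *)

Definition Pprod (r : nat) (p : 'I_r -> nat) : nat := (\prod_(i < r) p i)%N.

Definition hatp (r : nat) (p : 'I_r -> nat) (j : 'I_r) : nat := (Pprod p %/ p j)%N.

(* E = {+-1}^r, encoded as boolean vectors: true = +1, false = -1 *)
Definition sgnb (b : bool) : int := if b then 1 else -1.

Definition Nstar (r : nat) (p : 'I_r -> nat) (e : {ffun 'I_r -> bool}) : int :=
  \sum_(j < r) sgnb (e j) * (hatp p j)%:Z.

(* m_0 = (r - 2 - sum_j 1/p_j) P = (r-2) P - sum_j \hat p_j *)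
Definition m0 (r : nat) (p : 'I_r -> nat) : int :=
  (r%:Z - 2) * (Pprod p)%:Z - \sum_(j < r) (hatp p j)%:Z.

Definition in_class (r : nat) (p : 'I_r -> nat) (m : int) (e : {ffun 'I_r -> bool}) : bool :=
  (Nstar p e == m - r%:Z * (Pprod p)%:Z %[mod (2 * Pprod p)%N%:Z])%Z.

(* chi : Z -> Z (values computed in rat; they are integers).
   m is in the support set rP + N_*(E) + 2PZ iff some eps is in_class;
   then eps is unique (paper), selected here by [pick]. *)
Definition chi (r : nat) (p : 'I_r -> nat) (m : int) : rat :=
  match [pick e | in_class p m e] with
  | Some e =>
      let l : rat := (m - (r%:Z - 2) * (Pprod p)%:Z - Nstar p e)%:~R
                     / ((2 * Pprod p)%N%:R) in
      (\prod_(i < r - 3) (l + (i.+1)%:R)) / ((r - 3)`!)%:R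
        * (\prod_(j < r) sgnb (e j))%:~R
  | None => 0
  end.

From HB Require Import structures.
From mathcomp Require Import all_boot all_order all_algebra ring.
Import Order.TTheory GRing.Theory Num.Theory.
Set Implicit Arguments. Unset Strict Implicit.
Local Open Scope ring_scope.

(* If n lies in the class rP + N_*(eps) + 2PZ, then n^2 mod 4P depends only on
   the class, and flipping the signs of eps does not change it: writing
   N_*(eps) = A + D and N_*(eps') = A - D with D, A supported on disjoint sets
   of indices, the difference of the squares is 4 D (rP + A), and P divides
   D A because P divides \hat p_i \hat p_k for i <> k.  Since m_0 lies in the
   class of eps = (-1,...,-1), n^2 = m_0^2 (mod 4P).
   If n lies outside the support, so does n + 2Pk for every k, hence
   sum_j x^j chi_j(n) is a polynomial of degree < r - 2 vanishing at the
   infinitely many points n + 2Pk: all chi_j(n) are 0. *)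

Lemma eqz_mod_sqr (m : nat) (x y : int) :
  (x == y %[mod (2 * m)%N%:Z])%Z -> (x ^+ 2 == y ^+ 2 %[mod (4 * m)%N%:Z])%Z.
Proof.
rewrite !eqz_mod_dvd => /dvdzP [t Dxy].
have -> : x = y + t * (2 * m)%N%:Z by rewrite -Dxy addrC subrK.
have -> : (y + t * (2 * m)%N%:Z) ^+ 2 - y ^+ 2
    = (4 * m)%N%:Z * (t * y + t ^+ 2 * m%:Z) by rewrite !PoszM; ring.
exact: dvdz_mulr (dvdzz _).
Qed.

Lemma periodic_addrn (V : zmodType) (T : Type) (f : V -> T) (c : V) :
  (forall x, f (x + c) = f x) -> forall x k, f (x + c *+ k) = f x.
Proof.
by move=> fc x; elim=> [|k IHk]; rewrite ?mulr0n ?addr0 // mulrSr addrA fc.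
Qed.

Lemma coef_eq0_of_injective_roots (R : idomainType) (d : nat)
    (c : 'I_d -> R) (x : nat -> R) :
  injective x -> (forall k, \sum_(j < d) x k ^+ j * c j = 0) ->
  forall j, c j = 0.
Proof.
move=> x_inj x_root j.
pose cf i := if insub i is Some j' then c j' else 0.
have cfE (j' : 'I_d) : cf j' = c j' by rewrite /cf valK.
pose q : {poly R} := \poly_(i < d) cf i.
have q_roots : all (root q) [seq x k | k <- iota 0 d].
  apply/allP => _ /mapP [k _ ->]; apply/eqP.
  rewrite horner_poly -[RHS](x_root k).
  by apply: eq_bigr => i _; rewrite cfE mulrC.
have q0 : q = 0.
  apply/eqP; apply: contraT => /max_poly_roots /(_ q_roots).
  rewrite map_inj_uniq ?iota_uniq // size_map size_iota => /(_ isT).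
  by rewrite ltnNge size_poly.
by have := congr1 (fun s : {poly R} => s`_j) q0; rewrite coef_poly ltn_ord cfE coef0.
Qed.

Section SignClasses.

Variables (r : nat) (p : 'I_r -> nat).

Local Notation P := (Pprod p)%:Z.

Lemma dvdn_hatp (i k : 'I_r) : i != k -> (p k %| hatp p i)%N.
Proof.
move=> ik; have [pi0 | pi_gt0] := posnP (p i); first by rewrite /hatp pi0 divn0.
rewrite /hatp /Pprod (bigD1 i) //= mulKn // (bigD1 k) 1?eq_sym //=.
exact: dvdn_mulr.
Qed.

Lemma dvdz_hatp_mul (i k : 'I_r) :
  i != k -> (P %| (hatp p i)%:Z * (hatp p k)%:Z)%Z.
Proof.
move=> ik; rewrite -PoszM dvdzE /=.
have [q ->] := dvdnP (dvdn_hatp ik).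
have pk_dvdP : (p k %| Pprod p)%N by rewrite /Pprod (bigD1 k) //= dvdn_mulr.
by rewrite -mulnA [(p k * _)%N]mulnC /hatp divnK // dvdn_mull.
Qed.

Lemma dvdz_hatp_sum_mul (x y : 'I_r -> int) : (forall i, x i * y i = 0) ->
  (P %| (\sum_i x i * (hatp p i)%:Z) * (\sum_k y k * (hatp p k)%:Z))%Z.
Proof.
move=> xy0; rewrite big_distrl rpred_sum // => i _.
rewrite big_distrr rpred_sum // => k _ /=.
have [<- | ik] := eqVneq i k.
  by rewrite mulrACA xy0 mul0r dvdz0.
by rewrite mulrACA dvdz_mull // dvdz_hatp_mul.
Qed.

Definition class_rep (e : {ffun 'I_r -> bool}) : int := r%:Z * P + Nstar p e.

Lemma class_rep_sqr_eqmod (e e' : {ffun 'I_r -> bool}) :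
  (class_rep e ^+ 2 == class_rep e' ^+ 2 %[mod (4 * Pprod p)%N%:Z])%Z.
Proof.
pose h i := (hatp p i)%:Z.
pose d i := if e i == e' i then 0 else sgnb (e i).
pose a i := if e i == e' i then sgnb (e i) else 0.
pose D := \sum_i d i * h i; pose A := \sum_i a i * h i.
have NeE : Nstar p e = A + D.
  rewrite /Nstar -big_split; apply: eq_bigr => i _ /=.
  by rewrite /d /a /h; case: (e i); case: (e' i) => /=; ring.
have Ne'E : Nstar p e' = A - D.
  rewrite /Nstar -sumrB; apply: eq_bigr => i _ /=.
  by rewrite /d /a /h; case: (e i); case: (e' i) => /=; ring.
have P_DA : (P %| D * A)%Z.
  by apply: dvdz_hatp_sum_mul => i; rewrite /d /a; case: ifP; rewrite ?mul0r ?mulr0.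
rewrite eqz_mod_dvd /class_rep NeE Ne'E.
have -> : (r%:Z * P + (A + D)) ^+ 2 - (r%:Z * P + (A - D)) ^+ 2
    = 4%N%:Z * (D * r%:Z * P + D * A) by ring.
by rewrite PoszM dvdz_mul // rpredD // dvdz_mull.
Qed.

Lemma in_classE (n : int) (e : {ffun 'I_r -> bool}) :
  in_class p n e = (n == class_rep e %[mod (2 * Pprod p)%N%:Z])%Z.
Proof.
rewrite /in_class /class_rep !eqz_mod_dvd.
have -> : Nstar p e - (n - r%:Z * P) = - (n - (r%:Z * P + Nstar p e)) by ring.
by rewrite rpredN.
Qed.

Lemma in_class_addrn (n : int) (k : nat) (e : {ffun 'I_r -> bool}) :
  in_class p (n + (2 * Pprod p)%N%:Z *+ k) e = in_class p n e.
Proof. by rewrite !in_classE -mulr_natl addrC modzMDl. Qed.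

Lemma m0_eqmod : (m0 p == class_rep [ffun => false] %[mod (2 * Pprod p)%N%:Z])%Z.
Proof.
rewrite eqz_mod_dvd /m0 /class_rep.
have -> : Nstar p [ffun => false] = - \sum_i (hatp p i)%:Z.
  by rewrite /Nstar -sumrN; apply: eq_bigr => i _; rewrite ffunE mulN1r.
have -> : (r%:Z - 2) * P - \sum_i (hatp p i)%:Z - (r%:Z * P + - \sum_i (hatp p i)%:Z)
  = - (2 * Pprod p)%N%:Z by rewrite PoszM; ring.
by rewrite rpredN dvdzz.
Qed.

Lemma in_class_sqr_eqmod_m0 (n : int) (e : {ffun 'I_r -> bool}) :
  in_class p n e -> (n ^+ 2 == m0 p ^+ 2 %[mod (4 * Pprod p)%N%:Z])%Z.
Proof.
rewrite in_classE => /eqz_mod_sqr /eqP ->.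
rewrite (eqP (class_rep_sqr_eqmod e [ffun => false])).
by rewrite (eqP (eqz_mod_sqr m0_eqmod)).
Qed.

Lemma chi_eq0 (n : int) : (forall e, ~~ in_class p n e) -> chi p n = 0.
Proof. by move=> n_off; rewrite /chi; case: pickP => // e; rewrite (negbTE (n_off e)). Qed.

End SignClasses.

Theorem proposition4p8 (r : nat) (p : 'I_r -> nat)
  (hr : (3 <= r)%N)
  (hpos : forall i, (0 < p i)%N)
  (hcop : forall i j : 'I_r, i != j -> coprime (p i) (p j))
  (hodd : forall i : 'I_r, (0 < i)%N -> odd (p i))
  (chij : 'I_(r - 2) -> int -> rat)
  (hper : forall j n, chij j (n + (2 * Pprod p)%N%:Z) = chij j n)
  (hdec : forall m : int, chi p m = \sum_(j < r - 2) (m%:~R) ^+ j * chij j m) :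
  forall (j : 'I_(r - 2)) (n : int), chij j n != 0 ->
    (n ^+ 2 == (m0 p) ^+ 2 %[mod (4 * Pprod p)%N%:Z])%Z.
Proof.
move=> j n; apply: contraNT => n_sqr_neq.
have n_off e : ~~ in_class p n e.
  by apply: contra n_sqr_neq => /in_class_sqr_eqmod_m0.
have P2_neq0 : (2 * Pprod p)%N%:Z != 0 by rewrite eqz_nat muln_eq0 /= -lt0n prodn_gt0.
apply/eqP; apply: (@coef_eq0_of_injective_roots _ _ (chij^~ n)
  (fun k => (n + (2 * Pprod p)%N%:Z *+ k)%:~R)).
  by move=> k k' /intr_inj /addrI /(mulrIn P2_neq0).
move=> k; have shift_off e : ~~ in_class p (n + (2 * Pprod p)%N%:Z *+ k) e.
  by rewrite in_class_addrn.
rewrite -[RHS](chi_eq0 shift_off) hdec.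
by apply: eq_bigr => i _; rewrite (periodic_addrn (hper i)).
Qed.
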